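(* Let $(X,d)$ be a metric vector space (with translation-invariant metric $d$) such that $\dim X<\infty$. Let $A_0\subseteq A_1\subseteq A_2\subseteq\cdots\subseteq X$ be a nested sequence of subsets of $X$ satisfying: (A1) there is a map $K:\mathbb{N}\to\mathbb{N}$ with $K(n)\ge n$ and $A_n+A_n\subseteq A_{K(n)}$ for all $n\in\mathbb{N}$; (A2) $\lambda A_n\subseteq A_n$ for all $n\in\mathbb{N}$ and all scalars $\lambda$; (A3) $\bigcup_{n\in\mathbb{N}}A_n$ is dense in $X$. Then there exists $N\in\mathbb{N}$ such that $A_N=X$.
   Context: For subsets $A,B$ of a vector space and a scalar $\lambda$, $A+B=\{a+b:a\in A,b\in B\}$ and $\lambda A=\{\lambda a:a\in A\}$. *)

From HB Require Import structures.
From mathcomp Require Import all_boot all_order all_algebra.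
From mathcomp Require Import boolp classical_sets reals.
Set Implicit Arguments. Unset Strict Implicit. Unset Printing Implicit Defensive.
Import Order.TTheory GRing.Theory Num.Theory.
Local Open Scope ring_scope.
Local Open Scope classical_set_scope.

Definition set_sum (V : zmodType) (A B : set V) : set V :=
  [set z | exists a, exists b, A a /\ B b /\ z = a + b].

Definition set_scale (R : nzRingType) (V : lmodType R) (l : R) (A : set V) : set V :=
  [set z | exists a, A a /\ z = l *: a].

Definition is_metric (R : realType) (X : Type) (d : X -> X -> R) : Prop :=
  [/\ (forall x y, 0 <= d x y),
      (forall x y, d x y = 0 <-> x = y),
      (forall x y, d x y = d y x) &
      (forall x y z, d x z <= d x y + d y z)].

(* A metric vector space over the reals: a real vector space X with a
   translation-invariant metric d for which the vector operations are
   continuous (addition is automatically continuous for a translation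
   invariant metric; we nevertheless state it for clarity). *)
Definition metric_vector_space (R : realType) (X : lmodType R)
    (d : X -> X -> R) : Prop :=
  [/\ is_metric d,
      (forall x y z, d (x + z) (y + z) = d x y),
      (forall x y (e : R), 0 < e -> exists2 r : R, 0 < r &
          forall x' y', d x x' < r -> d y y' < r -> d (x + y) (x' + y') < e) &
      (forall (l : R) x (e : R), 0 < e -> exists2 r : R, 0 < r &
          forall (l' : R) x', `|l - l'| < r -> d x x' < r ->
            d (l *: x) (l' *: x') < e)].

From HB Require Import structures.
From mathcomp Require Import all_boot all_order all_algebra.
From mathcomp Require Import boolp classical_sets reals.
From mathcomp Require Import topology normedtype derive.
From mathcomp Require Import lra.
Set Implicit Arguments.
Unset Strict Implicit.
Unset Printing Implicit Defensive.

Import Order.TTheory GRing.Theory Num.Theory numFieldNormedType.Exports.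
Local Open Scope ring_scope.
Local Open Scope classical_set_scope.

(* The union of the A_n spans a subspace, which is spanned by finitely many
   points u_1, ..., u_k of the union.  Finite-dimensional subspaces of a
   metric vector space are closed, so density of the union forces the span of
   the u_i to be all of X.  All u_i lie in a single A_m, and (A1), (A2) then
   put every combination c_1 u_1 + ... + c_k u_k into some A_N. *)

Section SpanSaturation.
Variables (F : fieldType) (X : vectType F).

Lemma ltn_dim_span_cons (a : X) (s : seq X) :
  a \notin <<s>>%VS -> (\dim <<s>> < \dim <<a :: s>>)%N.
Proof.
move=> a_s; rewrite ltnNge; apply: contra a_s => le_dim.
have sub : (<<s>> <= <<a :: s>>)%VS by rewrite span_cons addvSr.
have /eqP -> : <<s>>%VS == <<a :: s>>%VS by rewrite eqEdim sub le_dim.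
by rewrite span_cons (subvP (addvSl _ _)) // memv_line.
Qed.

Lemma span_saturate (P : set X) :
  exists2 s : seq X, (forall b, b \in s -> P b) & forall x, P x -> x \in <<s>>%VS.
Proof.
pose spanning s := forall x, P x -> x \in <<s>>%VS.
have grow s : ~ spanning s -> exists2 a, P a & (\dim <<s>> < \dim <<a :: s>>)%N.
  move=> /existsNP [a /not_implyP [Pa /negP a_s]].
  by exists a => //; apply: ltn_dim_span_cons.
suff saturate j s : (forall b, b \in s -> P b) -> (\dim {:X} - \dim <<s>> <= j)%N ->
    exists2 s', (forall b, b \in s' -> P b) & spanning s'.
  by apply: (saturate _ [::]) => //; rewrite subn0.
elim: j s => [|j IHj] s sP codim_s; have [|/grow [a Pa lt_dim]] := pselect (spanning s);
  try by exists s.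
all: have le_dim : (\dim <<a :: s>> <= \dim {:X})%N by apply/dimvS/subvf.
- by move: codim_s; rewrite leqn0 subn_eq0 leqNgt (leq_trans lt_dim).
- apply: (IHj (a :: s)); first by move=> b; rewrite inE => /predU1P [-> | /sP].
  by rewrite -ltnS (leq_trans _ codim_s) // ltn_sub2l // (leq_trans lt_dim).
Qed.

End SpanSaturation.

Section Filtration.
Variables (R : fieldType) (X : vectType R) (A : nat -> set X) (K : nat -> nat).
Hypotheses (A_nested : forall n, A n `<=` A n.+1)
  (A_sum : forall n, set_sum (A n) (A n) `<=` A (K n))
  (A_scale : forall n (l : R), set_scale l (A n) `<=` A n).

Lemma filtration_mono : {homo A : m n / (m <= n)%N >-> m `<=` n}.
Proof. exact: (homo_leq (@subset_refl X) (@subset_trans X) A_nested). Qed.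

Lemma filtration0 n x : A n x -> A n 0.
Proof. by move=> Ax; apply: (A_scale (l := 0)); exists x; rewrite scale0r. Qed.

Lemma span_sub_filtration n0 (s : seq X) : A n0 0 ->
  (forall b, b \in s -> exists n, A n b) -> exists N, forall x, x \in <<s>>%VS -> A N x.
Proof.
move=> A0; elim: s => [_|b s IHs sA].
  by exists n0 => x; rewrite span_nil memv0 => /eqP ->.
have [|N AN] := IHs; first by move=> c cs; apply: sA; rewrite inE cs orbT.
have [n Ab] := sA b (mem_head b s).
exists (K (maxn n N)) => _ /[!span_cons] /memv_addP [_ /vlineP [c ->] [w sw ->]].
apply: A_sum; exists (c *: b), w; split; [|split] => //.
  by apply: (filtration_mono (leq_maxl n N)); apply: A_scale; exists b.
by apply: (filtration_mono (leq_maxr n N)); apply: AN.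
Qed.

End Filtration.

Section MetricVectorSpace.
Variables (R : realType) (X : vectType R) (d : X -> X -> R).
Hypothesis dmvs : metric_vector_space d.

Lemma mvs_distxx x : d x x = 0.
Proof. by case: dmvs => -[_ d0 _ _] _ _ _; apply/d0. Qed.

Lemma mvs_dist_gt0 x y : x != y -> 0 < d x y.
Proof.
case: dmvs => -[d_ge0 d0 _ _] _ _ _ xy.
by rewrite lt_def d_ge0 andbT; apply: contra xy => /eqP /d0 ->.
Qed.

Lemma mvs_distC x y : d x y = d y x.
Proof. by case: dmvs => -[_ _ dC _] _ _ _. Qed.

Lemma mvs_dist_triangle x y z : d x z <= d x y + d y z.
Proof. by case: dmvs => -[_ _ _ dtri] _ _ _. Qed.

Lemma mvs_distDr x y z : d (x + z) (y + z) = d x y.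
Proof. by case: dmvs => _ dD _ _. Qed.

Lemma mvs_distB x y : d x y = d (x - y) 0.
Proof. by rewrite -(mvs_distDr x y (- y)) subrr. Qed.

Lemma mvs_scale_continuous (l : R) x e : 0 < e -> exists2 r, 0 < r &
  forall l' x', `|l - l'| < r -> d x x' < r -> d (l *: x) (l' *: x') < e.
Proof. by case: dmvs => _ _ _; apply. Qed.

Definition dist_vspace (U : {vspace X}) (x : X) : R :=
  inf [set d x w | w in [set w | w \in U]].

Lemma dist_vspace_le (U : {vspace X}) (x w : X) :
  w \in U -> dist_vspace U x <= d x w.
Proof.
move=> Uw; apply: ge_inf; last by exists w.
by exists 0 => _ [w' _ <-]; case: dmvs => -[].
Qed.

Lemma dist_vspace_lb (U : {vspace X}) (x : X) (e : R) :
  (forall w, w \in U -> e <= d x w) -> e <= dist_vspace U x.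
Proof.
move=> lb; apply: lb_le_inf => [|_ [w Uw <-]]; last exact: lb.
by exists (d x 0), 0; rewrite /= ?mem0v.
Qed.

Lemma dist_vspace_lipschitz (U : {vspace X}) (x y : X) :
  dist_vspace U y <= d x y + dist_vspace U x.
Proof.
rewrite -lerBlDl; apply: dist_vspace_lb => w Uw; rewrite lerBlDl.
apply: le_trans (dist_vspace_le y Uw) _.
by rewrite (mvs_distC x); apply: mvs_dist_triangle.
Qed.

Section AddLine.
Variables (U : {vspace X}) (b : X).
Hypothesis U_closed : forall y, y \notin U -> 0 < dist_vspace U y.

(* Continuity of scaling at (0, x): [c b + w] with [w] in [U] stays far from
   [x] when [|c|] is large, as [b + w / c] stays away from [0]. *)
Lemma dist_line_far x : b \notin U -> exists2 r, 0 < r &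
  forall c w, w \in U -> r^-1 < `|c| -> r <= d x (c *: b + w).
Proof.
move=> Ub; have [r r_gt0 near_x] := mvs_scale_continuous 0 x (U_closed Ub).
exists r => // c w Uw ltc; rewrite leNgt; apply/negP => close.
have c_neq0 : c != 0 by rewrite -normr_gt0 (lt_trans _ ltc) ?invr_gt0.
have ltcV : `|0 - c^-1| < r.
  by rewrite sub0r normrN normrV ?unitfE // invf_plt ?posrE ?normr_gt0.
move: (near_x _ _ ltcV close); rewrite scale0r scalerDr scalerA mulVf // scale1r.
rewrite mvs_distC -(mvs_distDr _ _ (- (c^-1 *: w))) addrK add0r.
by apply/negP; rewrite -leNgt dist_vspace_le // memvN memvZ.
Qed.

Lemma continuous_dist_line x :
  continuous (fun c : R => dist_vspace U (x - c *: b)).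
Proof.
move=> c; apply/cvgrPdist_lt => e e_gt0.
have [r r_gt0 near_c] := mvs_scale_continuous c b e_gt0.
apply/nbhs_normP; exists r => // t /= ltct.
have dct : d (c *: b) (t *: b) < e by apply: near_c; rewrite ?mvs_distxx.
have distB (c1 c2 : R) : d (x - c1 *: b) (x - c2 *: b) = d (c2 *: b) (c1 *: b).
  by rewrite mvs_distB [RHS]mvs_distB opprB addrC addrA subrK.
have := dist_vspace_lipschitz U (x - c *: b) (x - t *: b).
have := dist_vspace_lipschitz U (x - t *: b) (x - c *: b).
rewrite !distB (mvs_distC (t *: b)) ltr_distlC; lra.
Qed.

Lemma dist_addv_line_gt0 x :
  x \notin (<[b]> + U)%VS -> 0 < dist_vspace (<[b]> + U) x.
Proof.
have [Ub|Ub] := boolP (b \in U).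
  by rewrite (addv_idPr _) -?memvE //; apply: U_closed.
move=> xbU; have [r r_gt0 far] := dist_line_far x Ub.
pose g c := dist_vspace U (x - c *: b).
have g_gt0 c : 0 < g c.
  apply: U_closed; apply: contra xbU => xcbU.
  by rewrite -(subrK (c *: b) x) addrC memv_add ?memvZ ?memv_line.
have le_r : - r^-1 <= r^-1 by have := invr_gt0 r; rewrite r_gt0; lra.
have [c0 _ g_min] := EVT_min le_r (continuous_subspaceT (@continuous_dist_line x)).
apply: lt_le_trans (_ : 0 < Num.min (g c0) r) _; first by rewrite lt_min g_gt0.
apply: dist_vspace_lb => _ /memv_addP [_ /vlineP [c ->] [w Uw ->]].
have [lec|ltc] := leP `|c| r^-1; last by rewrite ge_min far ?orbT.
rewrite ge_min (le_trans (g_min c _)) //; first by rewrite in_itv /= -ler_norml.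
by rewrite /g (le_trans (dist_vspace_le _ Uw)) // mvs_distB [d x _]mvs_distB opprD addrA.
Qed.

End AddLine.

Lemma dist_vspace_gt0 (U : {vspace X}) x : x \notin U -> 0 < dist_vspace U x.
Proof.
rewrite -(span_basis (vbasisP U)); elim: (vbasis U : seq X) x => [|b s IHs] x.
  rewrite span_nil memv0 => x_neq0; apply: lt_le_trans (mvs_dist_gt0 x_neq0) _.
  by apply: dist_vspace_lb => w; rewrite memv0 => /eqP ->.
by rewrite span_cons; apply: dist_addv_line_gt0.
Qed.

Lemma vspace_closed (U : {vspace X}) x :
  (forall e, 0 < e -> exists2 w, w \in U & d x w < e) -> x \in U.
Proof.
move=> near_x; apply: contraT => /dist_vspace_gt0 dist_gt0.
have [w Uw] := near_x _ dist_gt0.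
by rewrite ltNge dist_vspace_le.
Qed.

End MetricVectorSpace.

Theorem mainTheorem1 (R : realType) (X : vectType R) (d : X -> X -> R)
    (A : nat -> set X) :
  metric_vector_space d ->
  (forall n, A n `<=` A n.+1) ->
  (* (A1) *)
  (exists K : nat -> nat, forall n, (n <= K n)%N /\ set_sum (A n) (A n) `<=` A (K n)) ->
  (* (A2) *)
  (forall n (l : R), set_scale l (A n) `<=` A n) ->
  (* (A3) *)
  (forall x (e : R), 0 < e -> exists n, exists2 y, A n y & d x y < e) ->
  exists N : nat, A N = [set: X].
Proof.
move=> dmvs A_nested [K A_sum] A_scale A_dense.
have A_sumK n : set_sum (A n) (A n) `<=` A (K n) by case: (A_sum n).
have [s sA A_span] := span_saturate (fun x => exists n, A n x).
have [n0 A0] : exists n, A n 0.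
  have [n [y Ay _]] := A_dense 0 1 ltr01.
  by exists n; apply: (filtration0 A_scale Ay).
have [N AN] := span_sub_filtration A_nested A_sumK A_scale A0 sA.
exists N; apply/seteqP; split=> // x _; apply: AN.
apply: (vspace_closed dmvs) => e e_gt0.
have [n [y Ay dxy]] := A_dense x e e_gt0.
by exists y => //; apply: A_span; exists n.
Qed.
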